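(* A countable group $G$ (with a proper left invariant metric) is locally finite if and only if $G$ is of flat growth, i.e. $G$ is of growth type at most a constant function.
   Context: A proper left invariant metric is $d(g,h)=\|g^{-1}h\|$ for a proper norm (zero only at identity, symmetric, subadditive, finite balls). A group is locally finite if every finitely generated subgroup is finite. An $s$-scale chain of length $m$ from $x$ to $y$ is $x=x_0,\dots,x_m=y$ with $d(x_i,x_{i+1})<s$; $A_g^{(n,s)}$ is the set of $h$ joined to $g$ by an $s$-scale chain of length $n$, and $gr_{(s,g)}(n)=\#A_g^{(n,s)}$. $u\preceq v$ means there is $C>0$ with $u(x)\le Cv(Cx)$ for large $x$. $G$ is of growth type at most $f$ if $gr_{(s,g)}\preceq f$ for all $g\in G$, $s>0$. *)

From HB Require Import structures.
From mathcomp Require Import all_boot all_order all_algebra.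
From mathcomp Require Import finmap all_classical all_reals.
Set Implicit Arguments. Unset Strict Implicit. Unset Printing Implicit Defensive.
Import Order.TTheory GRing.Theory Num.Theory.
Local Open Scope classical_set_scope.
Local Open Scope ring_scope.

Definition is_group (G : Type) (mul : G -> G -> G) (inv : G -> G) (one : G) : Prop :=
  [/\ (forall x y z, mul x (mul y z) = mul (mul x y) z),
      (forall x, mul one x = x), (forall x, mul x one = x),
      (forall x, mul (inv x) x = one) & (forall x, mul x (inv x) = one)].

Definition is_proper_norm (R : realType) (G : Type) (mul : G -> G -> G)
    (inv : G -> G) (one : G) (nrm : G -> R) : Prop :=
  [/\ (forall g, 0 <= nrm g), (forall g, nrm g = 0 <-> g = one),
      (forall g, nrm (inv g) = nrm g),
      (forall g h, nrm (mul g h) <= nrm g + nrm h) &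
      (forall r : R, finite_set [set g | nrm g <= r])].

Definition dist (R : realType) (G : Type) (mul : G -> G -> G) (inv : G -> G)
    (nrm : G -> R) (g h : G) : R := nrm (mul (inv g) h).

Definition gen_subgroup (G : eqType) (mul : G -> G -> G) (inv : G -> G) (one : G)
    (S : seq G) : set G :=
  [set x | forall H : set G,
     (forall s, s \in (S : seq G) -> H s) -> H one ->
     (forall a b, H a -> H b -> H (mul a b)) ->
     (forall a, H a -> H (inv a)) -> H x].

Definition locally_finite (G : eqType) (mul : G -> G -> G) (inv : G -> G) (one : G)
  : Prop :=
  forall S : seq G, finite_set (gen_subgroup mul inv one S).

Definition chain_set (R : realType) (G : Type) (mul : G -> G -> G) (inv : G -> G)
    (nrm : G -> R) (s : R) (g : G) (n : nat) : set G :=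
  [set h | exists x : nat -> G, [/\ x 0%N = g, x n = h &
           forall i, (i < n)%N -> dist mul inv nrm (x i) (x i.+1) < s]].

(* gr_{(s,g)}(n) = #A_g^{(n,s)} (these sets are finite since balls are finite). *)
Definition growth_fun (R : realType) (G : countType) (mul : G -> G -> G)
    (inv : G -> G) (nrm : G -> R) (s : R) (g : G) (n : nat) : nat :=
  #|` fset_set (chain_set mul inv nrm s g n)|.

Definition growth_le (R : realType) (u : nat -> R) (v : R -> R) : Prop :=
  exists2 C : R, 0 < C & exists N : nat, forall n : nat, (N <= n)%N ->
    u n <= C * v (C * n%:R).

Definition growth_type_at_most (R : realType) (G : countType) (mul : G -> G -> G)
    (inv : G -> G) (nrm : G -> R) (f : R -> R) : Prop :=
  forall (g : G) (s : R), 0 < s ->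
    growth_le (fun n => (growth_fun mul inv nrm s g n)%:R) f.

Definition flat_growth (R : realType) (G : countType) (mul : G -> G -> G)
    (inv : G -> G) (nrm : G -> R) : Prop :=
  exists c : R, growth_type_at_most mul inv nrm (fun _ => c).

From HB Require Import structures.
From mathcomp Require Import all_boot all_order all_algebra.
From mathcomp Require Import finmap all_classical all_reals.
Set Implicit Arguments. Unset Strict Implicit. Unset Printing Implicit Defensive.
Import Order.TTheory GRing.Theory Num.Theory.
Local Open Scope classical_set_scope.
Local Open Scope ring_scope.

(* In a group, s-scale chains from one are exactly the words in the ball
   B_s = {t | |t| < s}: so A_g^(n,s) = g * B_s^n.  If G is locally finite, the
   ball generates a finite subgroup H and every A_g^(n,s) lies in the finite
   coset gH, so growth is bounded.  Conversely, a finite S lies in the ball of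
   radius s = 1 + max |S|, hence the subgroup generated by S lies in the union
   of the increasing sets A_1^(n,s); if it were infinite, finite subsets of any
   size would fit in a single A_1^(m,s) with m large, contradicting a constant
   bound on the growth. *)

Section ChainSets.

Variables (R : realType) (G : Type) (mul : G -> G -> G) (inv : G -> G).
Variables (nrm : G -> R) (s : R).

Local Notation A := (chain_set mul inv nrm s).
Local Notation d := (dist mul inv nrm).

Lemma chain_set0 g : A g 0 = [set g].
Proof.
apply/seteqP; split=> h /=; first by case=> x [<- <- _].
by move->; exists (fun=> g).
Qed.

Lemma chain_setS g n : A g n.+1 = [set h | exists2 h', A g n h' & d h' h < s].
Proof.
apply/seteqP; split=> h /=.
  case=> x [x0 xn xs]; exists (x n); last by rewrite -xn; apply: xs.
  by exists x; split=> // i lt_in; apply: xs; rewrite ltnS ltnW.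
case=> h' [x [x0 xn xs]] dh'h; exists (fun i => if (i <= n)%N then x i else h).
split=> //=; first by rewrite ltnn.
move=> i; rewrite ltnS; case: (ltngtP i n) => // [lt_in _|-> _]; last by rewrite xn.
exact: xs.
Qed.

End ChainSets.

Section GroupLaws.

Variables (G : Type) (mul : G -> G -> G) (inv : G -> G) (one : G).
Hypothesis hG : is_group mul inv one.

Lemma group_mulKg a b : mul (inv a) (mul a b) = b.
Proof. by case: hG => mulA mul1g _ mulVg _; rewrite mulA mulVg mul1g. Qed.

Lemma group_mulKVg a b : mul a (mul (inv a) b) = b.
Proof. by case: hG => mulA mul1g _ _ mulgV; rewrite mulA mulgV mul1g. Qed.

Lemma group_inv1 : inv one = one.
Proof. by case: hG => _ _ mulg1 mulVg _; rewrite -[LHS]mulg1 mulVg. Qed.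

Lemma group_invK a : inv (inv a) = a.
Proof.
case: hG => mulA mul1g mulg1 mulVg _.
by rewrite -[LHS]mulg1 -(mulVg a) mulA mulVg mul1g.
Qed.

Lemma group_invM a b : inv (mul a b) = mul (inv b) (inv a).
Proof.
case: hG => mulA mul1g mulg1 mulVg mulgV.
have ab_inv : mul (mul a b) (mul (inv b) (inv a)) = one.
  by rewrite -mulA group_mulKVg mulgV.
by rewrite -[LHS]mulg1 -ab_inv mulA mulVg mul1g.
Qed.

End GroupLaws.

Section ChainSetsInGroup.

Variables (R : realType) (G : Type) (mul : G -> G -> G) (inv : G -> G).
Variables (one : G) (nrm : G -> R) (s : R).
Hypothesis hG : is_group mul inv one.
Hypothesis hN : is_proper_norm mul inv one nrm.

Local Notation A := (chain_set mul inv nrm s).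

Lemma chain_set_mulr g n a t : A g n a -> nrm t < s -> A g n.+1 (mul a t).
Proof. by move=> Aa nt; rewrite chain_setS; exists a; rewrite // /dist (group_mulKg hG). Qed.

Lemma chain_set_subS g n : 0 < s -> A g n `<=` A g n.+1.
Proof.
move=> s_gt0 a Aa; case: hG => _ _ mulg1 _ _; rewrite -[a]mulg1.
by apply: chain_set_mulr Aa _; case: hN => _ /(_ one)[_ /(_ erefl)->].
Qed.

Lemma chain_set_le g n m : 0 < s -> (n <= m)%N -> A g n `<=` A g m.
Proof.
move=> s_gt0; elim: m => [|m IHm]; first by rewrite leqn0 => /eqP->.
rewrite leq_eqVlt => /orP[/eqP-> //|]; rewrite ltnS => /IHm le_nm.
by move=> a /le_nm; apply: chain_set_subS.
Qed.

Lemma chain_set_mul n m a b : A one n a -> A one m b -> A one (n + m) (mul a b).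
Proof.
have [mulA _ mulg1 _ _] := hG.
move=> Aa; elim: m b => [|m IHm] b; first by rewrite chain_set0 addn0 => ->; rewrite mulg1.
rewrite chain_setS addnS => -[b' Ab' db'b].
by rewrite -(group_mulKVg hG b' b) mulA; apply: chain_set_mulr (IHm _ Ab') _.
Qed.

Lemma chain_set_inv n a : A one n a -> A one n (inv a).
Proof.
have [mulA mul1g mulg1 _ mulgV] := hG; have [_ _ ninv _ _] := hN.
elim: n a => [|n IHn] a; first by rewrite chain_set0 => ->; rewrite (group_inv1 hG).
rewrite {1}chain_setS => -[a' Aa' da'a].
have -> : inv a = mul (mul (inv a) a') (inv a') by rewrite -mulA mulgV mulg1.
rewrite -add1n; apply: chain_set_mul (IHn _ Aa').
rewrite -[mul _ a']mul1g; apply: chain_set_mulr; first by rewrite chain_set0.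
by rewrite -ninv (group_invM hG) (group_invK hG).
Qed.

Lemma chain_set_finite g n : finite_set (A g n).
Proof.
have [_ _ _ _ fin_ball] := hN.
elim: n => [|n IHn]; first by rewrite chain_set0; exact: finite_set1.
apply: sub_finite_set (finite_image2 mul IHn (fin_ball s)).
rewrite chain_setS => h [h' Ah' dh'h]; exists h' => //.
by exists (mul (inv h') h); [apply: ltW | rewrite (group_mulKVg hG)].
Qed.

End ChainSetsInGroup.

Section GeneratedSubgroup.

Variables (R : realType) (G : eqType) (mul : G -> G -> G) (inv : G -> G).
Variables (one : G) (nrm : G -> R) (s : R).
Hypothesis hG : is_group mul inv one.
Hypothesis hN : is_proper_norm mul inv one nrm.

Local Notation A := (chain_set mul inv nrm s).
Local Notation gen := (gen_subgroup mul inv one).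

Lemma chain_set_sub_coset (S : seq G) g n :
  (forall t, nrm t < s -> t \in S) -> A g n `<=` mul g @` gen S.
Proof.
have [mulA _ mulg1 _ _] := hG.
move=> ball_S; elim: n => [|n IHn] h.
  by rewrite chain_set0 => ->; exists one; [move=> H _ | rewrite mulg1].
rewrite chain_setS => -[h' /IHn[k Sk <-] dh'h].
exists (mul k (mul (inv (mul g k)) h)); last by rewrite mulA (group_mulKVg hG).
rewrite /gen_subgroup /= => H HS H1 HM HV; apply: HM (Sk H HS H1 HM HV) _.
exact/HS/ball_S.
Qed.

Lemma gen_subgroup_sub_chain_sets (S : seq G) :
  (forall t, t \in S -> nrm t < s) -> gen S `<=` \bigcup_n A one n.
Proof.
have [_ mul1g _ _ _] := hG.
move=> S_ball x; apply.
- move=> t /S_ball nt; exists 1%N => //; rewrite -[t]mul1g.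
  by apply: (chain_set_mulr hG) nt; rewrite chain_set0.
- by exists 0%N => //; rewrite chain_set0.
- by move=> a b [n _ Aa] [m _ Ab]; exists (n + m)%N => //; apply: (chain_set_mul hG).
- by move=> a [n _ Aa]; exists n => //; apply: (chain_set_inv hG hN).
Qed.

Lemma seq_sub_chain_set (B : seq G) g N : 0 < s ->
  (forall x, x \in B -> (\bigcup_n A g n) x) ->
  exists2 m, (N <= m)%N & forall x, x \in B -> A g m x.
Proof.
move=> s_gt0; elim: B => [|y B IHB] B_chains; first by exists N.
have [|m le_Nm B_Am] := IHB; first by move=> x xB; apply/B_chains/mem_behead.
have [k _ Ak] := B_chains y (mem_head y B).
exists (maxn m k); first by rewrite (leq_trans le_Nm) ?leq_maxl.
move=> x; rewrite in_cons => /orP[/eqP-> | xB].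
  by apply: (chain_set_le hG hN) Ak; rewrite ?leq_maxr.
by apply: (chain_set_le hG hN) (B_Am x xB); rewrite ?leq_maxl.
Qed.

End GeneratedSubgroup.

Section Growth.

Variables (R : realType) (G : countType) (mul : G -> G -> G) (inv : G -> G).
Variables (one : G) (nrm : G -> R).
Hypothesis hG : is_group mul inv one.
Hypothesis hN : is_proper_norm mul inv one nrm.

Local Notation A := (chain_set mul inv nrm).
Local Notation gr := (growth_fun mul inv nrm).

Lemma growth_fun_le_card s g n (X : set G) :
  finite_set X -> A s g n `<=` X -> (gr s g n <= #|` fset_set X|)%N.
Proof.
move=> finX AX; apply: fsubset_leq_card.
by rewrite -fset_set_sub //; apply: (chain_set_finite _ hG hN).
Qed.

Lemma card_le_growth_fun s g n (B : {fset G}) :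
  [set` B] `<=` A s g n -> (#|` B| <= gr s g n)%N.
Proof.
move=> BA; apply/fsubset_leq_card/fsubsetP => x xB.
by rewrite in_fset_set ?inE; [apply: BA | apply: (chain_set_finite _ hG hN)].
Qed.

Lemma locally_finite_flat_growth :
  locally_finite mul inv one -> flat_growth mul inv nrm.
Proof.
have [_ _ _ _ fin_ball] := hN.
move=> lf; exists 1 => g s s_gt0.
have fin_open_ball : finite_set [set t | nrm t < s].
  by apply: sub_finite_set (fin_ball s) => t /ltW.
pose S := fset_set [set t | nrm t < s].
have ball_S t : nrm t < s -> t \in (S : seq G).
  by move=> nt; rewrite in_fset_set ?inE.
pose K := #|` fset_set (mul g @` gen_subgroup mul inv one S)|.
exists (K%:R + 1); first by rewrite ltr_wpDl.
exists 0%N => n _; rewrite mulr1 natr1 ler_nat; apply/leqW/growth_fun_le_card.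
  exact/finite_image/lf.
exact: (chain_set_sub_coset hG).
Qed.

Lemma flat_growth_locally_finite :
  flat_growth mul inv nrm -> locally_finite mul inv one.
Proof.
move=> [c flat] S.
pose s := 1 + \big[Num.max/0]_(u <- S) nrm u.
have S_ball t : t \in S -> nrm t < s.
  by move=> tS; rewrite ltr_pwDl // (le_bigmax_seq _ _ _ _ tS).
have s_gt0 : 0 < s by rewrite ltr_pwDl // bigmax_ge_id.
have [C _ [N growth_bound]] := flat one s s_gt0.
apply: contrapT => /(infinite_set_fset (Num.truncn (C * c)).+1)[B B_gen card_B].
have [m le_Nm B_Am] := seq_sub_chain_set (B := B) (g := one) hG hN N s_gt0
  (fun x xB => gen_subgroup_sub_chain_sets hG hN S_ball (B_gen x xB)).
have := growth_bound m le_Nm; apply/negP; rewrite -ltNge /=.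
apply: lt_le_trans (truncnS_gt (C * c)) _.
by rewrite ler_nat (leq_trans card_B) // card_le_growth_fun // => x /B_Am.
Qed.

End Growth.

Theorem mainTheorem18 (R : realType) (G : countType)
    (mul : G -> G -> G) (inv : G -> G) (one : G) (nrm : G -> R) :
  is_group mul inv one ->
  is_proper_norm mul inv one nrm ->
  (locally_finite mul inv one <-> flat_growth mul inv nrm).
Proof.
move=> hG hN; split.
- exact: locally_finite_flat_growth.
- exact: flat_growth_locally_finite.
Qed.
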